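(* Let $\mathfrak{s}_1=\langle e_1,e_2,e_3,e_4\rangle$ be the real Lie algebra with only nonzero brackets $[e_2,e_4]=-e_1$, $[e_3,e_4]=-e_3$. Write $r=x_1e_{12}+x_2e_{13}+x_3e_{14}+x_4e_{23}+x_5e_{24}+x_6e_{34}\in\Lambda^2\mathfrak{s}_1$, $e_{ij}=e_i\wedge e_j$. Then $(\Lambda^3\mathfrak{s}_1)^{\mathfrak{s}_1}=0$, $(\Lambda^2\mathfrak{s}_1)^{\mathfrak{s}_1}=\langle e_{12}\rangle$, and the set $\mathcal{Y}_{\mathfrak{s}_1}$ of $r$-matrices equals the set of solutions of the classical Yang–Baxter equation, given by $x_5=0$, $x_3x_4=0$, $x_3x_6=0$. The orbits of $\mathrm{Aut}(\mathfrak{s}_1)$ (acting by $r\mapsto\Lambda^2T(r)$) on $\mathcal{Y}_{\mathfrak{s}_1}$ are $\{0\}$ and the following sets (all unlisted coordinates being $0$): $\mathrm{I}_\pm:\ x_1\in\mathbb{R}_\pm$; $\mathrm{II}:\ x_2\neq0$; $\mathrm{III}_\pm:\ x_1\in\mathbb{R}_\pm,\ x_2\neq0$; $\mathrm{IV}:\ x_2\in\mathbb{R},\ x_4\neq0$; $\mathrm{V}_\pm:\ x_1\in\mathbb{R}_\pm,\ x_2\in\mathbb{R},\ x_4\neq0$; $\mathrm{VI}:\ x_1,x_2\in\mathbb{R},\ x_3\neq0$; $\mathrm{VII}:\ x_2,x_4\in\mathbb{R},\ x_6\neq0$; $\mathrm{VIII}_\pm:\ x_1\in\mathbb{R}_\pm,\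 x_2,x_4\in\mathbb{R},\ x_6\neq0$. Consequently, up to Lie algebra automorphisms of $\mathfrak{s}_1$ there are exactly five classes of coboundary cocommutators $\delta_r$, $r\in\mathcal{Y}_{\mathfrak{s}_1}$, corresponding to $r$ in $\{0\}\cup\mathrm{I}_+\cup\mathrm{I}_-$ (the zero cocommutator), $\mathrm{II}\cup\mathrm{III}_\pm$, $\mathrm{IV}\cup\mathrm{V}_\pm$, $\mathrm{VI}$, and $\mathrm{VII}\cup\mathrm{VIII}_\pm$, represented respectively by $r=0,\ e_{13},\ e_{23},\ e_{14},\ e_{34}$.
   Context: $[\cdot,\cdot]$ is the algebraic Schouten bracket on $\Lambda\mathfrak{s}_1$; $(\Lambda^m\mathfrak{g})^{\mathfrak{g}}=\{w:[v,w]=0\ \forall v\in\mathfrak{g}\}$. An $r$-matrix is $r\in\Lambda^2\mathfrak{g}$ with $[r,r]\in(\Lambda^3\mathfrak{g})^{\mathfrak{g}}$ (mCYBE); the CYBE is $[r,r]=0$. $\delta_r(v)=[v,r]$; cocommutators $\delta_1,\delta_2$ are equivalent if $\delta_2=\Lambda^2T\circ\delta_1\circ T^{-1}$ for some Lie algebra automorphism $T$. $\mathbb{R}_+$, $\mathbb{R}_-$ denote positive and negative reals. *)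

From HB Require Import structures.
From mathcomp Require Import all_boot all_order all_algebra.
From mathcomp Require Import reals.
Set Implicit Arguments. Unset Strict Implicit. Unset Printing Implicit Defensive.
Import Order.TTheory GRing.Theory Num.Theory.
Local Open Scope ring_scope.

Section S1.
Variable R : realType.

Definition b1 : 'I_4 := @Ordinal 4 0 isT.
Definition b2 : 'I_4 := @Ordinal 4 1 isT.
Definition b3 : 'I_4 := @Ordinal 4 2 isT.
Definition b4 : 'I_4 := @Ordinal 4 3 isT.

Definition gvec := 'cV[R]_4.
Definition ev (i : 'I_4) : gvec := delta_mx i 0.

Definition brb (i j : 'I_4) : gvec :=
  if (i == b2) && (j == b4) then - ev b1
  else if (i == b4) && (j == b2) then ev b1
  else if (i == b3) && (j == b4) then - ev b3
  else if (i == b4) && (j == b3) then ev b3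
  else 0.

Definition lie (u v : gvec) : gvec :=
  \sum_(i < 4) \sum_(j < 4) (u i 0 * v j 0) *: brb i j.

Definition is_aut (T : 'M[R]_4) : Prop :=
  T \in unitmx /\ forall u v : gvec, T *m lie u v = lie (T *m u) (T *m v).

(* exterior algebra Lambda s_1: coefficient of e_S = e_{s_1} /\ ... /\ e_{s_p}
   (s_1 < ... < s_p) for each subset S of the basis *)
Definition ext := {ffun {set 'I_4} -> R^o}.
Definition eS (S : {set 'I_4}) : ext := [ffun T => (T == S)%:R].

Definition homog (m : nat) (w : ext) : Prop := forall S : {set 'I_4}, #|S| != m -> w S = 0.

Definition inv_sign (S T : {set 'I_4}) : R :=
  (-1) ^+ #|[set p : 'I_4 * 'I_4 | [&& p.1 \in S, p.2 \in T & (p.2 < p.1)%N]]|.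
Definition wedge_basis (S T : {set 'I_4}) : ext :=
  if [disjoint S & T] then inv_sign S T *: eS (S :|: T) else 0.
Definition wedge (a b : ext) : ext :=
  \sum_(S : {set 'I_4}) \sum_(T : {set 'I_4}) (a S * b T) *: wedge_basis S T.

Definition iota (v : gvec) : ext := \sum_(i < 4) v i 0 *: eS [set i].

(* algebraic Schouten bracket:
   [X1/\../\Xp, Y1/\../\Yq] = sum_{i,j} (-1)^(i+j) [Xi,Yj] /\ X1..^Xi..Xp /\ Y1..^Yj..Yq *)
Definition pos (i : 'I_4) (S : {set 'I_4}) : nat := #|[set s in S | (s < i)%N]|.
Definition sch_basis (S T : {set 'I_4}) : ext :=
  \sum_(i in S) \sum_(j in T)
     (-1) ^+ (pos i S + pos j T) *:
       wedge (wedge (iota (brb i j)) (eS (S :\ i))) (eS (T :\ j)).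
Definition schouten (a b : ext) : ext :=
  \sum_(S : {set 'I_4}) \sum_(T : {set 'I_4}) (a S * b T) *: sch_basis S T.

Definition g_invariant (m : nat) (w : ext) : Prop :=
  homog m w /\ forall v : gvec, schouten (iota v) w = 0.

Definition is_rmatrix (r : ext) : Prop := homog 2 r /\ g_invariant 3 (schouten r r).

Definition e12 := eS [set b1; b2].
Definition e13 := eS [set b1; b3].
Definition e14 := eS [set b1; b4].
Definition e23 := eS [set b2; b3].
Definition e24 := eS [set b2; b4].
Definition e34 := eS [set b3; b4].
Definition x1 (r : ext) := r [set b1; b2].
Definition x2 (r : ext) := r [set b1; b3].
Definition x3 (r : ext) := r [set b1; b4].
Definition x4 (r : ext) := r [set b2; b3].
Definition x5 (r : ext) := r [set b2; b4].
Definition x6 (r : ext) := r [set b3; b4].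

Definition lam2 (T : 'M[R]_4) (w : ext) : ext :=
  \sum_(i < 4) \sum_(j < 4 | (i < j)%N)
     w [set i; j] *: wedge (iota (T *m ev i)) (iota (T *m ev j)).

Definition same_orbit (r r' : ext) : Prop :=
  exists T, is_aut T /\ r' = lam2 T r.

Definition delta (r : ext) : gvec -> ext := fun v => schouten (iota v) r.
Definition equiv_coc (d1 d2 : gvec -> ext) : Prop :=
  exists T, is_aut T /\ forall v, d2 v = lam2 T (d1 (invmx T *m v)).

End S1.

Inductive orbit_cls :=
  O0 | OIp | OIm | OII | OIIIp | OIIIm | OIV | OVp | OVm | OVI | OVII
  | OVIIIp | OVIIIm.

Section Cls.
Variable R : realType.
Local Open Scope ring_scope.

Definition in_cls (c : orbit_cls) (r : ext R) : Prop :=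
  homog 2 r /\ x5 r = 0 /\
  match c with
  | O0 => [/\ x1 r = 0, x2 r = 0, x3 r = 0, x4 r = 0 & x6 r = 0]
  | OIp => [/\ 0 < x1 r, x2 r = 0, x3 r = 0, x4 r = 0 & x6 r = 0]
  | OIm => [/\ x1 r < 0, x2 r = 0, x3 r = 0, x4 r = 0 & x6 r = 0]
  | OII => [/\ x1 r = 0, x2 r != 0, x3 r = 0, x4 r = 0 & x6 r = 0]
  | OIIIp => [/\ 0 < x1 r, x2 r != 0, x3 r = 0, x4 r = 0 & x6 r = 0]
  | OIIIm => [/\ x1 r < 0, x2 r != 0, x3 r = 0, x4 r = 0 & x6 r = 0]
  | OIV => [/\ x1 r = 0, x3 r = 0, x4 r != 0 & x6 r = 0]
  | OVp => [/\ 0 < x1 r, x3 r = 0, x4 r != 0 & x6 r = 0]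
  | OVm => [/\ x1 r < 0, x3 r = 0, x4 r != 0 & x6 r = 0]
  | OVI => [/\ x3 r != 0, x4 r = 0 & x6 r = 0]
  | OVII => [/\ x1 r = 0, x3 r = 0 & x6 r != 0]
  | OVIIIp => [/\ 0 < x1 r, x3 r = 0 & x6 r != 0]
  | OVIIIm => [/\ x1 r < 0, x3 r = 0 & x6 r != 0]
  end.

End Cls.

Inductive coc_cls := C0 | CII | CIV | CVI | CVII.

Definition grp (c : orbit_cls) : coc_cls :=
  match c with
  | O0 | OIp | OIm => C0
  | OII | OIIIp | OIIIm => CII
  | OIV | OVp | OVm => CIV
  | OVI => CVI
  | OVII | OVIIIp | OVIIIm => CVII
  end.

Definition rep (R : realType) (k : coc_cls) : ext R :=
  match k with
  | C0 => 0
  | CII => e13 R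
  | CIV => e23 R
  | CVI => e14 R
  | CVII => e34 R
  end.

From Pilot Require Import Defs.
From HB Require Import structures.
From mathcomp Require Import all_boot all_order all_algebra.
From mathcomp Require Import reals.
From mathcomp Require Import ring lra.
Set Implicit Arguments. Unset Strict Implicit. Unset Printing Implicit Defensive.
Import Order.TTheory GRing.Theory Num.Theory.
Local Open Scope ring_scope.

(* The proof works in explicit coordinates.

   The theorem then follows by algebra on coordinates: the invariant
   multivectors are read off the brackets with e3 and e4, the r-matrices off
   [r, r]; each listed orbit class is Aut-stable (orbit_stable) and contains an
   explicit canonical bivector from which every member is reached
   (canon_reach); the classes of cocommutators follow by naturality of delta
   (delta_natural), and distinct classes are separated by comparing the
   cocommutators at e3 and e4 (coc_separate). *)

(* Bit i of the code s of a subset of 'I_4 tells whether e_(i+1) belongs to it. *)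
Definition bit (s i : nat) : bool := odd (s %/ 2 ^ i).

Fact bset_key : unit. Proof. exact: tt. Qed.
(* The subset of 'I_4 with characteristic bit vector s; it is locked so that
   it never unfolds during the computations below. *)
Definition bset (s : nat) : {set 'I_4} := locked_with bset_key [set i : 'I_4 | bit s i].

Definition code (S : {set 'I_4}) : nat :=
  ((b1 \in S) + (b2 \in S).*2 + (b3 \in S).*2.*2 + (b4 \in S).*2.*2.*2)%N.

Definition code_of (f : nat -> bool) : nat :=
  (f 0%N + (f 1%N).*2 + (f 2%N).*2.*2 + (f 3%N).*2.*2.*2)%N.

Lemma bsetE s : bset s = [set i : 'I_4 | bit s i]. Proof. by rewrite /bset unlock. Qed.
Lemma in_bset s i : (i \in bset s) = bit s i. Proof. by rewrite bsetE inE. Qed.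

Lemma ord4_ind (P : 'I_4 -> Prop) : P b1 -> P b2 -> P b3 -> P b4 -> forall i, P i.
Proof.
move=> h1 h2 h3 h4 [[|[|[|[|n]]]] hn] //.
- by rewrite (_ : Ordinal hn = b1) //; apply: val_inj.
- by rewrite (_ : Ordinal hn = b2) //; apply: val_inj.
- by rewrite (_ : Ordinal hn = b3) //; apply: val_inj.
- by rewrite (_ : Ordinal hn = b4) //; apply: val_inj.
Qed.

Lemma code_lt S : (code S < 16)%N.
Proof.
by rewrite /code;
  case: (b1 \in S); case: (b2 \in S); case: (b3 \in S); case: (b4 \in S).
Qed.

Lemma codeK S : bset (code S) = S.
Proof.
apply/setP; elim/ord4_ind => /=; rewrite in_bset /code /bit;
by case: (b1 \in S); case: (b2 \in S); case: (b3 \in S); case: (b4 \in S).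
Qed.

Lemma bsetK s : (s < 16)%N -> code (bset s) = s.
Proof.
rewrite /code !in_bset => hs; apply/eqP.
have : all (fun s => bit s 0 + (bit s 1).*2 + (bit s 2).*2.*2 + (bit s 3).*2.*2.*2 == s)%N
         (iota 0 16) by [].
by move/allP/(_ s); rewrite mem_iota; apply.
Qed.

Lemma bset_inj s t : (s < 16)%N -> (t < 16)%N -> (bset s == bset t) = (s == t).
Proof. by move=> hs ht; apply/eqP/eqP => [h|->//]; rewrite -(bsetK hs) -(bsetK ht) h. Qed.

Lemma bit_code_of f (i : 'I_4) : bit (code_of f) i = f i.
Proof.
elim/ord4_ind: i; rewrite /bit /code_of /=;
by case: (f 0%N); case: (f 1%N); case: (f 2%N); case: (f 3%N).
Qed.

Lemma code_of_lt f : (code_of f < 16)%N.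
Proof. by rewrite /code_of; case: (f 0%N); case: (f 1%N); case: (f 2%N); case: (f 3%N). Qed.

Definition lor s t := code_of (fun i => bit s i || bit t i).
Definition land s t := code_of (fun i => bit s i && bit t i).
Definition cdel s (i : nat) := code_of (fun k => bit s k && (k != i)).
Definition csing (i : nat) := code_of (fun k => k == i).

Lemma bsetU s t : bset s :|: bset t = bset (lor s t).
Proof. by apply/setP => i; rewrite ?inE ?in_bset bit_code_of. Qed.
Lemma bsetI s t : bset s :&: bset t = bset (land s t).
Proof. by apply/setP => i; rewrite ?inE ?in_bset bit_code_of. Qed.
Lemma bsetD1 s (i : 'I_4) : bset s :\ i = bset (cdel s i).
Proof. by apply/setP => k; rewrite ?inE ?in_bset bit_code_of andbC. Qed.
Lemma bset1 (i : 'I_4) : [set i] = bset (csing i).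
Proof. by apply/setP => k; rewrite ?inE ?in_bset bit_code_of. Qed.
Lemma bset_norm u : bset u = bset (code_of (bit u)).
Proof. by apply/setP => k; rewrite !in_bset bit_code_of. Qed.

Lemma bset_disj s t : [disjoint bset s & bset t] = (land s t == 0%N).
Proof.
rewrite -setI_eq0 bsetI (_ : set0 = bset 0) ?bset_inj ?code_of_lt //.
by apply/setP => k; rewrite ?inE ?in_bset /bit div0n.
Qed.

Definition bcount (f : nat -> bool) : nat := (f 0%N + f 1%N + f 2%N + f 3%N)%N.
Definition popcount s := bcount (bit s).
Definition posc (i : nat) s := bcount (fun x => bit s x && (x < i)%N).
Definition inversions s t :=
  (bcount (fun j => [&& bit s 0, bit t j & (j < 0)%N]) +
   bcount (fun j => [&& bit s 1, bit t j & (j < 1)%N]) +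
   bcount (fun j => [&& bit s 2, bit t j & (j < 2)%N]) +
   bcount (fun j => [&& bit s 3, bit t j & (j < 3)%N]))%N.

Lemma sum4 (V : nmodType) (F : 'I_4 -> V) : \sum_(i < 4) F i = F b1 + F b2 + F b3 + F b4.
Proof.
rewrite !big_ord_recl big_ord0 addr0 !addrA; congr (F _ + F _ + F _ + F _);
  exact: val_inj.
Qed.

Lemma card4 (P : pred 'I_4) : #|[set i | P i]| = (P b1 + P b2 + P b3 + P b4)%N.
Proof.
rewrite cardsE -sum1_card big_mkcond /= sum4.
rewrite -[b1 \in P]/(P b1) -[b2 \in P]/(P b2) -[b3 \in P]/(P b3) -[b4 \in P]/(P b4).
by case: (P b1); case: (P b2); case: (P b3); case: (P b4).
Qed.

Lemma card_bset s : #|bset s| = popcount s.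
Proof. by rewrite bsetE card4. Qed.

Lemma pos_bset (i : 'I_4) s : pos i (bset s) = posc i s.
Proof. by rewrite /pos card4 ?inE ?in_bset. Qed.

Lemma card_inv s t :
  #|[set p : 'I_4 * 'I_4 | [&& p.1 \in bset s, p.2 \in bset t & (p.2 < p.1)%N]]| =
  inversions s t.
Proof.
rewrite cardsE -sum1_card big_mkcond /=.
transitivity (\sum_i \sum_j
    (if [&& i \in bset s, j \in bset t & (j < i)%N] then 1 else 0))%N.
  by rewrite pair_bigA; apply: eq_bigr => -[i j].
rewrite !sum4 ?inE ?in_bset /inversions /bcount /=.
by case: (bit s 0); case: (bit s 1); case: (bit s 2); case: (bit s 3);
   case: (bit t 0); case: (bit t 1); case: (bit t 2); case: (bit t 3).
Qed.

(* Unlocked sums over lists, which reduce by simplification. *)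
Definition lsum {X : Type} {V : nmodType} (l : seq X) (F : X -> V) : V :=
  foldr (fun x acc => F x + acc) 0 l.

Lemma big_lsum {X : Type} {V : nmodType} (l : seq X) (F : X -> V) :
  \sum_(x <- l) F x = lsum l F.
Proof. by elim: l => [|x l IH]; rewrite ?big_nil ?big_cons ?IH. Qed.

Lemma eq_lsum {X : Type} {V : nmodType} (l : seq X) (F G : X -> V) :
  (forall x, F x = G x) -> lsum l F = lsum l G.
Proof. by move=> h; elim: l => //= x l ->; rewrite h. Qed.

Lemma eq_lsum_in {X : eqType} {V : nmodType} (l : seq X) (F G : X -> V) :
  (forall x, x \in l -> F x = G x) -> lsum l F = lsum l G.
Proof.
elim: l => //= x l IH h; rewrite h ?mem_head // IH // => y hy.
by apply: h; rewrite in_cons hy orbT.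
Qed.

Lemma lsum0 {X : Type} {V : nmodType} (l : seq X) (F : X -> V) :
  (forall x, F x = 0) -> lsum l F = 0.
Proof. by move=> h; elim: l => //= x l ->; rewrite h addr0. Qed.

Lemma lsum_map {X Y : Type} {V : nmodType} (l : seq X) (g : X -> Y) (F : Y -> V) :
  lsum (map g l) F = lsum l (fun x => F (g x)).
Proof. by elim: l => //= x l ->. Qed.

Lemma lsum_filter {X : Type} {V : nmodType} (l : seq X) (P : pred X) (F : X -> V) :
  (forall x, ~~ P x -> F x = 0) -> lsum [seq x <- l | P x] F = lsum l F.
Proof. by move=> h; elim: l => //= x l IH; case: ifP => hx /=; rewrite IH // h ?hx // add0r. Qed.

Lemma lsum_allpairs {V : nmodType} (l1 l2 : seq nat) (F : nat * nat -> V) :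
  lsum l1 (fun s => lsum l2 (fun t => F (s, t))) = lsum [seq (s, t) | s <- l1, t <- l2] F.
Proof.
elim: l1 => //= s l ->; rewrite -!big_lsum big_cat /=; congr (_ + _).
by rewrite big_map.
Qed.

Definition codes := iota 0 16.

Lemma mem_codes x : (x \in codes) = (x < 16)%N.
Proof. by rewrite mem_iota add0n. Qed.

Lemma sum_set (V : nmodType) (F : {set 'I_4} -> V) :
  \sum_(S : {set 'I_4}) F S = lsum codes (fun s => F (bset s)).
Proof.
rewrite (reindex_onto (fun j : 'I_16 => bset j) (fun S => inord (code S))) /=;
  last by move=> S _; rewrite inordK ?code_lt // codeK.
rewrite (eq_bigl xpredT); last by move=> j; rewrite bsetK // inord_val eqxx.
by rewrite -(big_mkord xpredT (fun j => F (bset j))) /index_iota subn0 big_lsum.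
Qed.

Lemma lsum_delta {K : pzSemiRingType} (G : nat -> K) c : (c < 16)%N ->
  lsum codes (fun x => (x == c)%:R * G x) = G c.
Proof.
move=> hc; rewrite -big_lsum /codes (big_rem c) ?mem_iota ?add0n ?hc //.
rewrite eqxx mul1r big1_seq; first exact: addr0.
move=> x /andP[_]; rewrite (mem_rem_uniq _ (iota_uniq 0 16)) !inE.
by case/andP => /negbTE ->; rewrite mul0r.
Qed.

(* Structure constants over an arbitrary ring, indexed by codes:
   wedge_coef s t u is the coefficient of e_u in e_s /\ e_t, bracket_coef i j k
   that of e_k in [e_i, e_j] (indices from 0), and sch_coef s t u that of e_u
   in the Schouten bracket [e_s, e_t]. *)
Section Coefficients.
Variable K : pzRingType.

Definition rsum4 (f : nat -> K) : K := f 0%N + f 1%N + f 2%N + f 3%N.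

Lemma eq_rsum4 (F G : nat -> K) : (forall x, F x = G x) -> rsum4 F = rsum4 G.
Proof. by move=> h; rewrite /rsum4 !h. Qed.

Definition wedge_coef (s t u : nat) : K :=
  if land s t == 0%N then (-1) ^+ inversions s t * (code_of (bit u) == lor s t)%:R
  else 0.

Definition bracket_coef (i j k : nat) : K :=
  if (i == 1%N) && (j == 3%N) then - (k == 0%N)%:R
  else if (i == 3%N) && (j == 1%N) then (k == 0%N)%:R
  else if (i == 2%N) && (j == 3%N) then - (k == 2%N)%:R
  else if (i == 3%N) && (j == 2%N) then (k == 2%N)%:R
  else 0.

Definition sch_coef (s t u : nat) : K :=
  rsum4 (fun i => if bit s i then rsum4 (fun j => if bit t j then
     (-1) ^+ (posc i s + posc j t) *
     lsum codes (fun y =>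
       rsum4 (fun k => bracket_coef i j k * wedge_coef (csing k) (cdel s i) y) *
       wedge_coef y (cdel t j) u)
   else 0) else 0).

End Coefficients.

(* The structure constants commute with ring morphisms, hence are the images of
   their integer values. *)
Section CoefficientMorphism.
Variables (K1 K2 : pzRingType) (f : {rmorphism K1 -> K2}).

Lemma rmorph_lsum {X : Type} (l : seq X) (F : X -> K1) :
  f (lsum l F) = lsum l (fun x => f (F x)).
Proof. by elim: l => /= [|x l <-]; rewrite ?rmorph0 ?rmorphD. Qed.

Lemma rmorph_rsum4 (F : nat -> K1) : f (rsum4 F) = rsum4 (fun x => f (F x)).
Proof. by rewrite /rsum4 !rmorphD. Qed.

Lemma rmorph_if b (x : K1) : f (if b then x else 0) = if b then f x else 0.
Proof. by case: b; rewrite ?rmorph0. Qed.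

Lemma rmorph_wedge_coef s t u : f (wedge_coef K1 s t u) = wedge_coef K2 s t u.
Proof. by rewrite /wedge_coef rmorph_if rmorphM rmorphXn rmorphN1 rmorph_nat. Qed.

Lemma rmorph_bracket_coef i j k : f (bracket_coef K1 i j k) = bracket_coef K2 i j k.
Proof. by rewrite /bracket_coef; repeat case: ifP => _; rewrite ?rmorphN ?rmorph_nat ?rmorph0. Qed.

Lemma rmorph_sch_coef s t u : f (sch_coef K1 s t u) = sch_coef K2 s t u.
Proof.
rewrite /sch_coef rmorph_rsum4; apply: eq_rsum4 => i.
rewrite rmorph_if rmorph_rsum4; congr (if _ then _ else _); apply: eq_rsum4 => j.
rewrite rmorph_if; congr (if _ then _ else _).
rewrite rmorphM rmorphXn rmorphN1 rmorph_lsum; congr (_ * _); apply: eq_lsum => y.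
rewrite rmorphM rmorph_wedge_coef rmorph_rsum4; congr (_ * _); apply: eq_rsum4 => k.
by rewrite rmorphM rmorph_wedge_coef rmorph_bracket_coef.
Qed.
End CoefficientMorphism.

Section BasisCoefficients.
Variable R : realType.

Lemma eSE S U : eS R S U = (U == S)%:R. Proof. by rewrite ffunE. Qed.
Lemma scaleE (c : R) (f : ext R) U : (c *: f) U = c * f U. Proof. by rewrite ffunE. Qed.
Lemma addE (f g : ext R) U : (f + g) U = f U + g U. Proof. by rewrite ffunE. Qed.
Lemma zeroE U : (0 : ext R) U = 0. Proof. by rewrite ffunE. Qed.

Lemma wedgeE (a b : ext R) U :
  wedge a b U = \sum_S \sum_T a S * b T * wedge_basis R S T U.
Proof.
rewrite /wedge sum_ffunE; apply: eq_bigr => S _; rewrite sum_ffunE.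
by apply: eq_bigr => T _; rewrite scaleE.
Qed.

Lemma schE (a b : ext R) U :
  schouten a b U = \sum_S \sum_T a S * b T * sch_basis R S T U.
Proof.
rewrite /schouten sum_ffunE; apply: eq_bigr => S _; rewrite sum_ffunE.
by apply: eq_bigr => T _; rewrite scaleE.
Qed.

Lemma wedge_basisE s t u : wedge_basis R (bset s) (bset t) (bset u) = wedge_coef R s t u.
Proof.
rewrite /wedge_basis /wedge_coef bset_disj; case: eqP => _; last by rewrite zeroE.
by rewrite scaleE eSE /inv_sign card_inv bsetU [bset u]bset_norm bset_inj ?code_of_lt.
Qed.

Lemma wedge_codes (a b : ext R) u : wedge a b (bset u) =
  lsum codes (fun s => lsum codes (fun t => a (bset s) * b (bset t) * wedge_coef R s t u)).
Proof.
rewrite wedgeE sum_set; apply: eq_lsum => s; rewrite sum_set.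
by apply: eq_lsum => t; rewrite wedge_basisE.
Qed.

Lemma wedge_eSr (a : ext R) c u : (c < 16)%N ->
  wedge a (eS R (bset c)) (bset u) = lsum codes (fun y => a (bset y) * wedge_coef R y c u).
Proof.
move=> hc; rewrite wedge_codes; apply: eq_lsum => y.
rewrite -(lsum_delta (fun t => a (bset y) * wedge_coef R y t u) hc).
apply: eq_lsum_in => t; rewrite mem_codes => ht.
by rewrite eSE bset_inj // mulrCA mulrA.
Qed.

Lemma iotaE (v : gvec R) x : (x < 16)%N ->
  Defs.iota v (bset x) = \sum_(k < 4) v k 0 * (x == csing k)%:R.
Proof.
move=> hx; rewrite /Defs.iota sum_ffunE; apply: eq_bigr => k _.
by rewrite scaleE eSE bset1 bset_inj ?code_of_lt.
Qed.

Lemma lsum_iota (v : gvec R) (G : nat -> R) :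
  lsum codes (fun x => Defs.iota v (bset x) * G x) = \sum_(k < 4) v k 0 * G (csing k).
Proof.
rewrite (eq_lsum_in (G := fun x => \sum_(k < 4) v k 0 * ((x == csing k)%:R * G x))).
  rewrite -big_lsum exchange_big; apply: eq_bigr => k _.
  by rewrite -mulr_sumr big_lsum lsum_delta // code_of_lt.
move=> x; rewrite mem_codes => hx; rewrite iotaE // mulr_suml.
by apply: eq_bigr => k _; rewrite mulrA.
Qed.

Lemma brbE (i j k : 'I_4) : brb R i j k 0 = bracket_coef R i j k.
Proof.
by elim/ord4_ind: i; elim/ord4_ind: j; elim/ord4_ind: k;
  rewrite /brb /bracket_coef /ev /= ?mxE /= ?oppr0 ?subr0 ?mxE /=.
Qed.

Lemma sch_basisE s t u : sch_basis R (bset s) (bset t) (bset u) = sch_coef R s t u.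
Proof.
rewrite /sch_basis sum_ffunE.
under eq_bigr => i _ do rewrite sum_ffunE.
under eq_bigr => i _ do under eq_bigr => j _ do
  rewrite scaleE !bsetD1 wedge_eSr ?code_of_lt // !pos_bset.
under eq_bigr => i _ do under eq_bigr => j _ do under eq_lsum => y do
  rewrite wedge_eSr ?code_of_lt // lsum_iota sum4 !brbE.
under eq_bigr => i _ do rewrite big_mkcond sum4 !in_bset.
by rewrite big_mkcond sum4 !in_bset.
Qed.
End BasisCoefficients.

Definition code_pairs m n :=
  [seq (s, t) | s <- [seq s <- codes | popcount s == m],
                t <- [seq t <- codes | popcount t == n]].
Definition schouten_table (m n u : nat) : seq (nat * nat * int) :=
  [seq q <- [seq (p, sch_coef int p.1 p.2 u) | p <- code_pairs m n] | q.2 != 0].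
Definition wedge_table (u : nat) : seq (nat * nat * int) :=
  [seq q <- [seq (p, wedge_coef int p.1 p.2 u) | p <- code_pairs 1 1] | q.2 != 0].

Ltac eval_schouten_table := match goal with |- context [schouten_table ?m ?n ?u] =>
  let l := eval vm_compute in (schouten_table m n u) in
  rewrite (_ : schouten_table m n u = l); [| by vm_compute] end.
Ltac eval_wedge_table := match goal with |- context [wedge_table ?u] =>
  let l := eval vm_compute in (wedge_table u) in
  rewrite (_ : wedge_table u = l); [| by vm_compute] end.

Section Tables.
Variable R : realType.

Lemma homog_bset m (a : ext R) s : homog m a -> popcount s != m -> a (bset s) = 0.
Proof. by move=> h hs; apply: h; rewrite card_bset. Qed.

Lemma lsum_homog (a b : ext R) m n (G : nat -> nat -> R) : homog m a -> homog n b ->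
  lsum codes (fun s => lsum codes (fun t => a (bset s) * b (bset t) * G s t)) =
  lsum (code_pairs m n) (fun p => a (bset p.1) * b (bset p.2) * G p.1 p.2).
Proof.
move=> ha hb; rewrite /code_pairs -lsum_allpairs.
rewrite lsum_filter => [|s hs]; last first.
  by apply: lsum0 => t; rewrite (homog_bset ha hs) !mul0r.
apply: eq_lsum => s; rewrite lsum_filter // => t ht.
by rewrite (homog_bset hb ht) mulr0 mul0r.
Qed.

Lemma schouten_tableE (a b : ext R) m n u : homog m a -> homog n b ->
  schouten a b (bset u) =
  lsum (schouten_table m n u) (fun q => a (bset q.1.1) * b (bset q.1.2) * (q.2)%:~R).
Proof.
move=> ha hb; rewrite schE sum_set.
under eq_lsum => s do rewrite sum_set.
under eq_lsum => s do under eq_lsum => t do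
  rewrite sch_basisE -(rmorph_sch_coef intr).
rewrite (lsum_homog (fun s t => (sch_coef int s t u)%:~R) ha hb).
rewrite /schouten_table lsum_filter => [|q]; first by rewrite lsum_map.
by rewrite negbK => /eqP ->; rewrite mulr0.
Qed.

Lemma wedge_tableE (a b : ext R) u : homog 1 a -> homog 1 b ->
  wedge a b (bset u) =
  lsum (wedge_table u) (fun q => a (bset q.1.1) * b (bset q.1.2) * (q.2)%:~R).
Proof.
move=> ha hb; rewrite wedge_codes.
under eq_lsum => s do under eq_lsum => t do rewrite -(rmorph_wedge_coef intr).
rewrite (lsum_homog (fun s t => (wedge_coef int s t u)%:~R) ha hb).
rewrite /wedge_table lsum_filter => [|q]; first by rewrite lsum_map.
by rewrite negbK => /eqP ->; rewrite mulr0.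
Qed.
End Tables.

Lemma lt16_ind (P : nat -> Prop) :
  P 0%N -> P 1%N -> P 2%N -> P 3%N -> P 4%N -> P 5%N -> P 6%N -> P 7%N ->
  P 8%N -> P 9%N -> P 10%N -> P 11%N -> P 12%N -> P 13%N -> P 14%N -> P 15%N ->
  forall k, (k < 16)%N -> P k.
Proof. by do 16 move=> ?; do 16 (case=> //). Qed.

(* Bivectors and trivectors in coordinates.  The codes of e12, e13, e14, e23,
   e24, e34 are 3, 5, 9, 6, 10, 12 and those of e123, e124, e134, e234 are
   7, 11, 13, 14. *)
Section Coordinates.
Variable R : realType.

Definition biv (y1 y2 y3 y4 y5 y6 : R) : ext R :=
  y1 *: eS R (bset 3) + y2 *: eS R (bset 5) + y3 *: eS R (bset 9) +
  y4 *: eS R (bset 6) + y5 *: eS R (bset 10) + y6 *: eS R (bset 12).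

Definition triv (z1 z2 z3 z4 : R) : ext R :=
  z1 *: eS R (bset 7) + z2 *: eS R (bset 11) + z3 *: eS R (bset 13) + z4 *: eS R (bset 14).

Lemma eS_bset s k : (s < 16)%N -> (k < 16)%N -> eS R (bset s) (bset k) = (k == s)%:R.
Proof. by move=> hs hk; rewrite eSE bset_inj. Qed.

Lemma bivE y1 y2 y3 y4 y5 y6 k : (k < 16)%N ->
  biv y1 y2 y3 y4 y5 y6 (bset k) =
  y1 * (k == 3)%:R + y2 * (k == 5)%:R + y3 * (k == 9)%:R +
  y4 * (k == 6)%:R + y5 * (k == 10)%:R + y6 * (k == 12)%:R.
Proof. by move=> hk; rewrite /biv !addE !scaleE !eS_bset. Qed.

Lemma trivE z1 z2 z3 z4 k : (k < 16)%N ->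
  triv z1 z2 z3 z4 (bset k) =
  z1 * (k == 7)%:R + z2 * (k == 11)%:R + z3 * (k == 13)%:R + z4 * (k == 14)%:R.
Proof. by move=> hk; rewrite /triv !addE !scaleE !eS_bset. Qed.

Lemma iota_bset (v : gvec R) k : (k < 16)%N ->
  Defs.iota v (bset k) = v b1 0 * (k == 1)%:R + v b2 0 * (k == 2)%:R +
                         v b3 0 * (k == 4)%:R + v b4 0 * (k == 8)%:R.
Proof. by move=> hk; rewrite iotaE // sum4. Qed.

Lemma ext_codes (a b : ext R) : (forall k, (k < 16)%N -> a (bset k) = b (bset k)) -> a = b.
Proof. by move=> h; apply/ffunP => S; rewrite -(codeK S) h ?code_lt. Qed.

Lemma homog_iota (v : gvec R) : homog 1 (Defs.iota v).
Proof.
move=> S; rewrite -(codeK S) card_bset iota_bset ?code_lt //.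
by move: (code S) (code_lt S); apply: lt16_ind => _ //=; rewrite ?mulr0 ?addr0.
Qed.

Lemma homog_biv y1 y2 y3 y4 y5 y6 : homog 2 (biv y1 y2 y3 y4 y5 y6).
Proof.
move=> S; rewrite -(codeK S) card_bset bivE ?code_lt //.
by move: (code S) (code_lt S); apply: lt16_ind => _ //=; rewrite ?mulr0 ?addr0.
Qed.

Lemma homog_triv z1 z2 z3 z4 : homog 3 (triv z1 z2 z3 z4).
Proof.
move=> S; rewrite -(codeK S) card_bset trivE ?code_lt //.
by move: (code S) (code_lt S); apply: lt16_ind => _ //=; rewrite ?mulr0 ?addr0.
Qed.

Lemma homog2_biv (w : ext R) : homog 2 w ->
  exists y1 y2 y3 y4 y5 y6 : R, w = biv y1 y2 y3 y4 y5 y6.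
Proof.
move=> hw; do 6 eexists; apply: ext_codes; apply: lt16_ind;
by rewrite bivE //= ?mulr0 ?mulr1 ?addr0 ?add0r // (homog_bset hw).
Qed.

Lemma homog3_triv (w : ext R) : homog 3 w -> exists z1 z2 z3 z4 : R, w = triv z1 z2 z3 z4.
Proof.
move=> hw; do 4 eexists; apply: ext_codes; apply: lt16_ind;
by rewrite trivE //= ?mulr0 ?mulr1 ?addr0 ?add0r // (homog_bset hw).
Qed.

Lemma biv_inj (y1 y2 y3 y4 y5 y6 z1 z2 z3 z4 z5 z6 : R) :
  biv y1 y2 y3 y4 y5 y6 = biv z1 z2 z3 z4 z5 z6 ->
  y1 = z1 /\ y2 = z2 /\ y3 = z3 /\ y4 = z4 /\ y5 = z5 /\ y6 = z6.
Proof.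
move=> h; have coord k := congr1 (fun w : ext R => w (bset k)) h.
move: (coord 3%N) (coord 5%N) (coord 9%N) (coord 6%N) (coord 10%N) (coord 12%N).
by rewrite /= !bivE //= !(mulr0, mulr1, addr0, add0r) => *; do !split.
Qed.

Lemma biv_congr (y1 y2 y3 y4 y5 y6 z1 z2 z3 z4 z5 z6 : R) :
  y1 = z1 -> y2 = z2 -> y3 = z3 -> y4 = z4 -> y5 = z5 -> y6 = z6 ->
  biv y1 y2 y3 y4 y5 y6 = biv z1 z2 z3 z4 z5 z6.
Proof. by move=> -> -> -> -> -> ->. Qed.

Lemma triv_congr (z1 z2 z3 z4 w1 w2 w3 w4 : R) :
  z1 = w1 -> z2 = w2 -> z3 = w3 -> z4 = w4 -> triv z1 z2 z3 z4 = triv w1 w2 w3 w4.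
Proof. by move=> -> -> -> ->. Qed.

Lemma triv_inj (z1 z2 z3 z4 w1 w2 w3 w4 : R) :
  triv z1 z2 z3 z4 = triv w1 w2 w3 w4 -> [/\ z1 = w1, z2 = w2, z3 = w3 & z4 = w4].
Proof.
move=> h; have coord k := congr1 (fun w : ext R => w (bset k)) h.
move: (coord 7%N) (coord 11%N) (coord 13%N) (coord 14%N).
by rewrite /= !trivE //= !(mulr0, mulr1, addr0, add0r) => *.
Qed.

Lemma biv0 : biv 0 0 0 0 0 0 = 0.
Proof. by rewrite /biv !scale0r !addr0. Qed.

Lemma triv0 : triv 0 0 0 0 = 0.
Proof. by rewrite /triv !scale0r !addr0. Qed.

Lemma intrE (n : nat) : (Posz n)%:~R = n%:R :> R. Proof. by []. Qed.
Lemma intrNE (n : nat) : (Negz n)%:~R = - (n.+1)%:R :> R. Proof. by rewrite NegzE mulrNz. Qed.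

Lemma deltaE (v : gvec R) y1 y2 y3 y4 y5 y6 :
  delta (biv y1 y2 y3 y4 y5 y6) v =
  biv (v b2 0 * y5) (v b2 0 * y6 - v b3 0 * y3 + v b4 0 * y2 + v b4 0 * y4)
      (v b4 0 * y5) (- v b3 0 * y5 + v b4 0 * y4) 0 (v b4 0 * y6).
Proof.
apply: ext_codes; apply: lt16_ind;
  rewrite /delta (schouten_tableE _ (homog_iota v) (homog_biv _ _ _ _ _ _));
  eval_schouten_table; rewrite /lsum /= ?iota_bset // ?bivE //= ?intrE ?intrNE.
all: ring.
Qed.

Lemma rrE y1 y2 y3 y4 y5 y6 :
  schouten (biv y1 y2 y3 y4 y5 y6) (biv y1 y2 y3 y4 y5 y6) =
  triv (2 * (y3 * y4 - y2 * y5 - y4 * y5)) (- 2 * y5 ^+ 2)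
       (2 * (y3 * y6 - y5 * y6)) (2 * (y5 * y6)).
Proof.
apply: ext_codes; apply: lt16_ind;
  rewrite (schouten_tableE _ (homog_biv _ _ _ _ _ _) (homog_biv _ _ _ _ _ _));
  eval_schouten_table; rewrite /lsum /= ?bivE // ?trivE //= ?intrE ?intrNE.
all: ring.
Qed.

Lemma sch_vec_trivE (v : gvec R) z1 z2 z3 z4 :
  schouten (Defs.iota v) (triv z1 z2 z3 z4) =
  triv (- v b2 0 * z4 - v b3 0 * z2 + v b4 0 * z1) 0
       (v b4 0 * z3 + v b4 0 * z4) (v b4 0 * z4).
Proof.
apply: ext_codes; apply: lt16_ind;
  rewrite (schouten_tableE _ (homog_iota v) (homog_triv _ _ _ _));
  eval_schouten_table; rewrite /lsum /= ?iota_bset // ?trivE //= ?intrE ?intrNE.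
all: ring.
Qed.
End Coordinates.

Section Automorphisms.
Variable R : realType.

Definition autm_entry (a b q d e f : R) (i j : nat) : R :=
  match i, j with
  | 0%N, 0%N => a | 0%N, 1%N => b | 0%N, 3%N => d
  | 1%N, 1%N => a | 1%N, 3%N => e
  | 2%N, 2%N => q | 2%N, 3%N => f
  | 3%N, 3%N => 1
  | _, _ => 0
  end.
Definition autm a b q d e f : 'M[R]_4 := \matrix_(i < 4, j < 4) autm_entry a b q d e f i j.

Lemma evE (i k : 'I_4) : ev R i k 0 = (k == i)%:R.
Proof. by rewrite /ev mxE andbT. Qed.

Lemma mul_ev (T : 'M[R]_4) i k : (T *m ev R i) k 0 = T k i.
Proof. by rewrite /ev -colE mxE. Qed.

Lemma mulmx_col (A : 'M[R]_4) (v : gvec R) k :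
  (A *m v) k 0 = A k b1 * v b1 0 + A k b2 * v b2 0 + A k b3 * v b3 0 + A k b4 * v b4 0.
Proof. by rewrite mxE sum4. Qed.

Lemma lieE (u v : gvec R) k : lie u v k 0 =
  (k == b1)%:R * - (u b2 0 * v b4 0 - u b4 0 * v b2 0) +
  (k == b3)%:R * - (u b3 0 * v b4 0 - u b4 0 * v b3 0).
Proof. by rewrite /lie summxE sum4 !summxE !sum4 !mxE !eqxx !andbT; ring. Qed.

Lemma autmM a b q d e f a' b' q' d' e' f' :
  autm a b q d e f *m autm a' b' q' d' e' f' =
  autm (a * a') (a * b' + b * a') (q * q') (a * d' + b * e' + d) (a * e' + e) (q * f' + f).
Proof.
apply/matrixP => i j; rewrite !mxE sum4 !mxE.
by elim/ord4_ind: i; elim/ord4_ind: j; rewrite /autm_entry /=; ring.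
Qed.

Lemma autm1 : autm 1 0 1 0 0 0 = 1%:M.
Proof. by apply/matrixP => i j; rewrite !mxE; elim/ord4_ind: i; elim/ord4_ind: j. Qed.

Lemma autm_unit a b q d e f : a != 0 -> q != 0 -> autm a b q d e f \in unitmx.
Proof.
move=> ha hq; suff : autm a b q d e f *m
    autm a^-1 (- b / a ^+ 2) q^-1 ((b * e - a * d) / a ^+ 2) (- e / a) (- f / q) = 1%:M.
  by case/mulmx1_unit.
rewrite autmM -autm1; congr autm; field; by rewrite ?ha ?hq.
Qed.

Lemma autm_aut a b q d e f : a != 0 -> q != 0 -> is_aut (autm a b q d e f).
Proof.
move=> ha hq; split; first exact: autm_unit.
move=> u v; apply/matrixP => k j; rewrite (ord1 j) {j}.
rewrite mulmx_col !lieE !mulmx_col !mxE.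
by elim/ord4_ind: k; rewrite /autm_entry /=; ring.
Qed.

Lemma unitmx_col (T : 'M[R]_4) i : T \in unitmx -> ~ (forall k, T k i = 0).
Proof.
move=> uT hi; have : T *m ev R i = 0.
  by apply/matrixP => k j; rewrite (ord1 j) mul_ev hi mxE.
move/(congr1 (mulmx (invmx T))); rewrite mulKmx // mulmx0.
by move/matrixP/(_ i 0); rewrite evE eqxx !mxE; apply/eqP; exact: oner_neq0.
Qed.

(* The bracket relations on basis vectors force the triangular form. *)
Lemma aut_form (T : 'M[R]_4) : is_aut T ->
  exists a b q d e f, [/\ a != 0, q != 0 & T = autm a b q d e f].
Proof.
move=> [uT hT].
have E i j k := congr1 (fun M : 'M[R]_(4,1) => M k 0) (hT (ev R i) (ev R j)).
move: (E b2 b4 b2) (E b2 b4 b4) (E b2 b4 b1) (E b2 b4 b3) (E b3 b4 b2) (E b3 b4 b4)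
  (E b3 b4 b1) (E b3 b4 b3) (E b1 b4 b3) (E b2 b3 b3).
rewrite /= !mulmx_col !lieE !evE !mul_ev /= => h1 h2 h3 h4 h5 h6 h7 h8 h9 h10.
have t21 : T b2 b1 = 0 by lra.
have t41 : T b4 b1 = 0 by lra.
have t23 : T b2 b3 = 0 by lra.
have t43 : T b4 b3 = 0 by lra.
have t13 : T b1 b3 = 0 by rewrite t23 t43 in h7; lra.
have t33 : T b3 b3 != 0.
  by apply/negP => /eqP t33; apply: (unitmx_col uT (i := b3)); elim/ord4_ind.
have t44 : T b4 b4 = 1.
  have : T b3 b3 * (T b4 b4 - 1) = 0 by rewrite t43 in h8; lra.
  by move/eqP; rewrite mulf_eq0 (negbTE t33) /= subr_eq0 => /eqP.
have t42 : T b4 b2 = 0.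
  have : T b4 b2 * T b3 b3 = 0 by rewrite t43 in h10; lra.
  by move/eqP; rewrite mulf_eq0 (negbTE t33) orbF => /eqP.
have t31 : T b3 b1 = 0 by rewrite t44 t41 in h9; lra.
have t32 : T b3 b2 = 0 by rewrite t44 t42 t31 in h4; lra.
have t22 : T b2 b2 = T b1 b1 by rewrite t44 t42 in h3; lra.
have t11 : T b1 b1 != 0.
  by apply/negP => /eqP t11; apply: (unitmx_col uT (i := b1)); elim/ord4_ind.
exists (T b1 b1), (T b1 b2), (T b3 b3), (T b1 b4), (T b2 b4), (T b3 b4); split => //.
apply/matrixP => i j; rewrite mxE.
by elim/ord4_ind: i; elim/ord4_ind: j; rewrite /autm_entry /=.
Qed.

Lemma aut_mul (A B : 'M[R]_4) : is_aut A -> is_aut B -> is_aut (A *m B).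
Proof.
move=> [uA hA] [uB hB]; split; first by rewrite unitmx_mul uA uB.
by move=> u v; rewrite -[LHS]mulmxA hB (hA (B *m u) (B *m v)) !mulmxA.
Qed.

Lemma aut_inv (A : 'M[R]_4) : is_aut A -> is_aut (invmx A).
Proof.
move=> [uA hA]; split; first by rewrite unitmx_inv.
move=> u v; apply: (can_inj (mulKmx uA)).
by rewrite /= mulKVmx // hA !mulKVmx.
Qed.
End Automorphisms.

Lemma set12 : [set b1; b2] = bset 3. Proof. by apply/setP; elim/ord4_ind; rewrite ?inE ?in_bset. Qed.
Lemma set13 : [set b1; b3] = bset 5. Proof. by apply/setP; elim/ord4_ind; rewrite ?inE ?in_bset. Qed.
Lemma set14 : [set b1; b4] = bset 9. Proof. by apply/setP; elim/ord4_ind; rewrite ?inE ?in_bset. Qed.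
Lemma set23 : [set b2; b3] = bset 6. Proof. by apply/setP; elim/ord4_ind; rewrite ?inE ?in_bset. Qed.
Lemma set24 : [set b2; b4] = bset 10. Proof. by apply/setP; elim/ord4_ind; rewrite ?inE ?in_bset. Qed.
Lemma set34 : [set b3; b4] = bset 12. Proof. by apply/setP; elim/ord4_ind; rewrite ?inE ?in_bset. Qed.

Section BivectorAction.
Variable R : realType.

Lemma lam2_coef (T : 'M[R]_4) (w : ext R) U :
  lam2 T w U = \sum_(i < 4) \sum_(j < 4 | (i < j)%N)
     w [set i; j] * wedge (Defs.iota (T *m ev R i)) (Defs.iota (T *m ev R j)) U.
Proof.
rewrite /lam2 sum_ffunE; apply: eq_bigr => i _; rewrite sum_ffunE.
by apply: eq_bigr => j _; rewrite scaleE.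
Qed.

Lemma lam2E (a b q d e f y1 y2 y3 y4 y5 y6 : R) :
  lam2 (autm a b q d e f) (biv y1 y2 y3 y4 y5 y6) =
  biv (a ^+ 2 * y1 + a * e * y3 + (b * e - a * d) * y5)
      (a * q * y2 + a * f * y3 + b * q * y4 + b * f * y5 - q * d * y6)
      (a * y3 + b * y5)
      (a * q * y4 + a * f * y5 - q * e * y6)
      (a * y5) (q * y6).
Proof.
apply: ext_codes; apply: lt16_ind; rewrite lam2_coef;
  under eq_bigr => i _ do rewrite big_mkcond sum4;
  rewrite sum4 /= ?mul0r ?addr0 ?add0r set12 set13 set14 set23 set24 set34 !bivE //=;
  rewrite !(wedge_tableE _ (homog_iota _) (homog_iota _)); eval_wedge_table;
  rewrite /lsum /= ?iota_bset // ?mul_ev ?mxE /autm_entry /= ?intrE ?intrNE.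
all: ring.
Qed.

Lemma lam2_comp (A B : 'M[R]_4) (w : ext R) : is_aut A -> is_aut B -> homog 2 w ->
  lam2 A (lam2 B w) = lam2 (A *m B) w.
Proof.
move=> /aut_form[a [b [q [d [e [f [_ _ ->]]]]]]].
move=> /aut_form[a' [b' [q' [d' [e' [f' [_ _ ->]]]]]]] /homog2_biv.
move=> [y1 [y2 [y3 [y4 [y5 [y6 ->]]]]]].
by rewrite autmM !lam2E; apply: biv_congr; ring.
Qed.

Lemma lam2_invK (T : 'M[R]_4) (w : ext R) : is_aut T -> homog 2 w ->
  lam2 (invmx T) (lam2 T w) = w.
Proof.
move=> hT hw; rewrite lam2_comp //; last exact: aut_inv.
rewrite mulVmx; last by case: hT.
have [y1 [y2 [y3 [y4 [y5 [y6 ->]]]]]] := homog2_biv hw.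
by rewrite -autm1 lam2E; apply: biv_congr; ring.
Qed.

Lemma delta_natural (T : 'M[R]_4) (w : ext R) (v : gvec R) : is_aut T -> homog 2 w ->
  delta (lam2 T w) (T *m v) = lam2 T (delta w v).
Proof.
move=> /aut_form[a [b [q [d [e [f [_ _ ->]]]]]]] /homog2_biv.
move=> [y1 [y2 [y3 [y4 [y5 [y6 ->]]]]]].
by rewrite lam2E !deltaE lam2E !mulmx_col !mxE /autm_entry /=; apply: biv_congr; ring.
Qed.
End BivectorAction.

Section Invariants.
Variable R : realType.

Lemma x1_biv (y1 y2 y3 y4 y5 y6 : R) : x1 (biv y1 y2 y3 y4 y5 y6) = y1.
Proof. by rewrite /x1 set12 bivE //=; ring. Qed.
Lemma x2_biv (y1 y2 y3 y4 y5 y6 : R) : x2 (biv y1 y2 y3 y4 y5 y6) = y2.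
Proof. by rewrite /x2 set13 bivE //=; ring. Qed.
Lemma x3_biv (y1 y2 y3 y4 y5 y6 : R) : x3 (biv y1 y2 y3 y4 y5 y6) = y3.
Proof. by rewrite /x3 set14 bivE //=; ring. Qed.
Lemma x4_biv (y1 y2 y3 y4 y5 y6 : R) : x4 (biv y1 y2 y3 y4 y5 y6) = y4.
Proof. by rewrite /x4 set23 bivE //=; ring. Qed.
Lemma x5_biv (y1 y2 y3 y4 y5 y6 : R) : x5 (biv y1 y2 y3 y4 y5 y6) = y5.
Proof. by rewrite /x5 set24 bivE //=; ring. Qed.
Lemma x6_biv (y1 y2 y3 y4 y5 y6 : R) : x6 (biv y1 y2 y3 y4 y5 y6) = y6.
Proof. by rewrite /x6 set34 bivE //=; ring. Qed.
Definition x_biv := (x1_biv, x2_biv, x3_biv, x4_biv, x5_biv, x6_biv).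

Lemma basis_biv :
  [/\ e12 R = biv 1 0 0 0 0 0, e13 R = biv 0 1 0 0 0 0, e14 R = biv 0 0 1 0 0 0,
      e23 R = biv 0 0 0 1 0 0 & e34 R = biv 0 0 0 0 0 1].
Proof.
by rewrite /e12 /e13 /e14 /e23 /e34 set12 set13 set14 set23 set34 /biv
  !scale0r !scale1r !(addr0, add0r).
Qed.

(* (Lambda^3 s_1)^{s_1} = 0: brackets with e3 and e4 kill every trivector. *)
Lemma inv3_zero (w : ext R) : g_invariant 3 w -> w = 0.
Proof.
move=> [/homog3_triv [z1 [z2 [z3 [z4 ->]]]] hv].
move: (hv (ev R b4)) (hv (ev R b3)); rewrite !sch_vec_trivE !evE /= -triv0.
by move=> /triv_inj[h1 h2 h3 h4] /triv_inj[h5 h6 h7 h8]; apply: triv_congr; lra.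
Qed.

Lemma inv2E (w : ext R) : g_invariant 2 w <-> exists c : R, w = c *: e12 R.
Proof.
have [-> _ _ _ _] := basis_biv.
have scale_biv c : c *: biv 1 0 0 0 0 0 = biv c 0 0 0 0 0.
  by rewrite /biv !scalerDr !scalerA mulr1 !mulr0.
split => [[/homog2_biv [y1 [y2 [y3 [y4 [y5 [y6 ->]]]]]] hv]|[c ->]].
  move: (hv (ev R b4)) (hv (ev R b3)).
  rewrite -/(delta _ (ev R b3)) -/(delta _ (ev R b4)) !deltaE !evE /= -biv0.
  move=> /biv_inj[h1 [h2 [h3 [h4 [h5 h6]]]]] /biv_inj[h7 [h8 [h9 [h10 [h11 h12]]]]].
  by exists y1; rewrite scale_biv; apply: biv_congr; lra.
rewrite scale_biv; split; first exact: homog_biv.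
by move=> v; rewrite -/(delta _ v) deltaE -biv0; apply: biv_congr; ring.
Qed.

Lemma cybeE (r : ext R) : homog 2 r ->
  (schouten r r = 0 <-> [/\ x5 r = 0, x3 r * x4 r = 0 & x3 r * x6 r = 0]).
Proof.
move=> /homog2_biv [y1 [y2 [y3 [y4 [y5 [y6 ->]]]]]].
rewrite rrE !x_biv -triv0; split.
  move=> /triv_inj[h1 h2 h3 h4].
  have h5 : y5 = 0 by apply/eqP; rewrite -sqrf_eq0; apply/eqP; lra.
  by split => //; rewrite h5 in h1 h3; lra.
by move=> [h5 h34 h36]; rewrite h5; apply: triv_congr; lra.
Qed.

Lemma sch_zero (a : ext R) : schouten a 0 = 0.
Proof.
apply/ffunP => U; rewrite schE zeroE big1 // => S _; rewrite big1 // => T _.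
by rewrite zeroE mulr0 mul0r.
Qed.

(* Since (Lambda^3 s_1)^{s_1} = 0, the mCYBE reduces to the CYBE. *)
Lemma rmatrix_cybe (r : ext R) : homog 2 r -> (is_rmatrix r <-> schouten r r = 0).
Proof.
move=> hr; split; first by move=> [_ /inv3_zero].
move=> h; split => //; rewrite h; split; first by move=> S _; rewrite zeroE.
by move=> v; rewrite sch_zero.
Qed.
End Invariants.

Section OrbitClasses.
Variable R : realType.

Definition cls_cond (c : orbit_cls) (y1 y2 y3 y4 y6 : R) : Prop :=
  match c with
  | O0 => [/\ y1 = 0, y2 = 0, y3 = 0, y4 = 0 & y6 = 0]
  | OIp => [/\ 0 < y1, y2 = 0, y3 = 0, y4 = 0 & y6 = 0]
  | OIm => [/\ y1 < 0, y2 = 0, y3 = 0, y4 = 0 & y6 = 0]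
  | OII => [/\ y1 = 0, y2 != 0, y3 = 0, y4 = 0 & y6 = 0]
  | OIIIp => [/\ 0 < y1, y2 != 0, y3 = 0, y4 = 0 & y6 = 0]
  | OIIIm => [/\ y1 < 0, y2 != 0, y3 = 0, y4 = 0 & y6 = 0]
  | OIV => [/\ y1 = 0, y3 = 0, y4 != 0 & y6 = 0]
  | OVp => [/\ 0 < y1, y3 = 0, y4 != 0 & y6 = 0]
  | OVm => [/\ y1 < 0, y3 = 0, y4 != 0 & y6 = 0]
  | OVI => [/\ y3 != 0, y4 = 0 & y6 = 0]
  | OVII => [/\ y1 = 0, y3 = 0 & y6 != 0]
  | OVIIIp => [/\ 0 < y1, y3 = 0 & y6 != 0]
  | OVIIIm => [/\ y1 < 0, y3 = 0 & y6 != 0]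
  end.

Lemma in_clsE c (y1 y2 y3 y4 y5 y6 : R) :
  in_cls c (biv y1 y2 y3 y4 y5 y6) <-> y5 = 0 /\ cls_cond c y1 y2 y3 y4 y6.
Proof.
rewrite /in_cls !x_biv; split => [[_ [h5 h]]|[h5 h]].
  by split => //; case: c h.
by split; [exact: homog_biv | split => //; case: c h].
Qed.

Lemma in_cls_homog c (r : ext R) : in_cls c r -> homog 2 r.
Proof. by case. Qed.

Lemma cls_cover (r : ext R) : is_rmatrix r -> exists c, in_cls c r.
Proof.
move=> h; have hr : homog 2 r by case: h.
move: h; rewrite rmatrix_cybe // cybeE //.
have [y1 [y2 [y3 [y4 [y5 [y6 ->]]]]]] := homog2_biv hr.
rewrite !x_biv => -[h5 h34 h36].
suff [c hc] : exists c, cls_cond c y1 y2 y3 y4 y6 by exists c; apply/in_clsE.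
have [h3|h3] := eqVneq y3 0; last first.
  exists OVI; split => //.
    by move/eqP: h34; rewrite mulf_eq0 (negbTE h3) => /eqP.
  by move/eqP: h36; rewrite mulf_eq0 (negbTE h3) => /eqP.
have [h6|h6] := eqVneq y6 0; last first.
  by case: (ltrgtP y1 0) => h1; [exists OVIIIm | exists OVIIIp | exists OVII].
have [h4|h4] := eqVneq y4 0; last first.
  by case: (ltrgtP y1 0) => h1; [exists OVm | exists OVp | exists OIV].
have [h2|h2] := eqVneq y2 0; last first.
  by case: (ltrgtP y1 0) => h1; [exists OIIIm | exists OIIIp | exists OII].
by case: (ltrgtP y1 0) => h1; [exists OIm | exists OIp | exists O0].
Qed.

Definition canon (c : orbit_cls) : ext R :=
  match c with
  | O0 => biv 0 0 0 0 0 0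
  | OIp => biv 1 0 0 0 0 0
  | OIm => biv (-1) 0 0 0 0 0
  | OII => biv 0 1 0 0 0 0
  | OIIIp => biv 1 1 0 0 0 0
  | OIIIm => biv (-1) 1 0 0 0 0
  | OIV => biv 0 0 0 1 0 0
  | OVp => biv 1 0 0 1 0 0
  | OVm => biv (-1) 0 0 1 0 0
  | OVI => biv 0 0 1 0 0 0
  | OVII => biv 0 0 0 0 0 1
  | OVIIIp => biv 1 0 0 0 0 1
  | OVIIIm => biv (-1) 0 0 0 0 1
  end.

Lemma canon_in c : in_cls c (canon c).
Proof.
by case: c; apply/in_clsE; split => //; split; rewrite ?ltr01 ?oppr_lt0 ?oner_neq0.
Qed.

Lemma neq0_eq (x y : R) : x = y -> y != 0 -> x != 0.
Proof. by move=> ->. Qed.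

(* Each class is stable under automorphisms: with x5 = 0 the coordinates
   transform triangularly, x1 by the positive factor a^2 when x3 = 0. *)
Lemma orbit_stable c (r : ext R) T : in_cls c r -> is_aut T -> in_cls c (lam2 T r).
Proof.
move=> hc /aut_form[a [b [q [d [e [f [ha hq ->]]]]]]].
have [y1 [y2 [y3 [y4 [y5 [y6 E]]]]]] := homog2_biv (in_cls_homog hc).
rewrite E in hc *; move/in_clsE: hc => [h5 hc]; rewrite lam2E; apply/in_clsE.
rewrite h5; split; first ring.
have ha2 : 0 < a ^+ 2 by rewrite exprn_even_gt0 // ha orbT.
have haq : a * q != 0 by rewrite mulf_neq0.
case: c hc => /=.
- by move=> [-> -> -> -> ->]; split; ring.
- by move=> [h1 -> -> -> ->]; split; try ring; nra.
- by move=> [h1 -> -> -> ->]; split; try ring; nra.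
- move=> [-> h2 -> -> ->]; split; try ring.
  by apply: (neq0_eq (y := a * q * y2)); [ring | rewrite mulf_neq0].
- move=> [h1 h2 -> -> ->]; split; try ring; first nra.
  by apply: (neq0_eq (y := a * q * y2)); [ring | rewrite mulf_neq0].
- move=> [h1 h2 -> -> ->]; split; try ring; first nra.
  by apply: (neq0_eq (y := a * q * y2)); [ring | rewrite mulf_neq0].
- move=> [-> -> h4 ->]; split; try ring.
  by apply: (neq0_eq (y := a * q * y4)); [ring | rewrite mulf_neq0].
- move=> [h1 -> h4 ->]; split; try ring; first nra.
  by apply: (neq0_eq (y := a * q * y4)); [ring | rewrite mulf_neq0].
- move=> [h1 -> h4 ->]; split; try ring; first nra.
  by apply: (neq0_eq (y := a * q * y4)); [ring | rewrite mulf_neq0].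
- move=> [h3 -> ->]; split; try ring.
  by apply: (neq0_eq (y := a * y3)); [ring | rewrite mulf_neq0].
- move=> [-> -> h6]; split; try ring.
  by apply: (neq0_eq (y := q * y6)); [ring | rewrite mulf_neq0].
- move=> [h1 -> h6]; split; try ring; first nra.
  by apply: (neq0_eq (y := q * y6)); [ring | rewrite mulf_neq0].
- move=> [h1 -> h6]; split; try ring; first nra.
  by apply: (neq0_eq (y := q * y6)); [ring | rewrite mulf_neq0].
Qed.

Lemma sqrt_neq0 (x : R) : 0 < x -> Num.sqrt x != 0.
Proof. by move=> hx; rewrite sqrtr_eq0 -ltNge. Qed.

Ltac nonzero_side :=
  repeat (match goal with H : is_true (_ != 0) |- _ => rewrite H end); try done.

(* Every member of a class is the image of the canonical representative by an
   explicit automorphism; a = sqrt |x1| normalizes x1 to +-1. *)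
Lemma canon_reach c (r : ext R) : in_cls c r -> same_orbit (canon c) r.
Proof.
move=> hc; have [y1 [y2 [y3 [y4 [y5 [y6 E]]]]]] := homog2_biv (in_cls_homog hc).
rewrite E in hc *; move/in_clsE: hc => [-> hc].
case: c hc => /=.
- move=> [-> -> -> -> ->]; exists (autm 1 0 1 0 0 0).
  by split; [apply: autm_aut; rewrite oner_neq0 | rewrite lam2E; apply: biv_congr; ring].
- move=> [h1 -> -> -> ->]; have ha := sqrt_neq0 h1; have hy : 0 <= y1 by apply: ltW.
  exists (autm (Num.sqrt y1) 0 1 0 0 0); split; first by apply: autm_aut; rewrite ?oner_neq0.
  by rewrite lam2E; apply: biv_congr; rewrite ?sqr_sqrtr //; field; nonzero_side.
- move=> [h1 -> -> -> ->]; have h1' : 0 < - y1 by rewrite oppr_gt0.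
  have ha := sqrt_neq0 h1'; have hy : 0 <= - y1 by apply: ltW.
  exists (autm (Num.sqrt (- y1)) 0 1 0 0 0); split; first by apply: autm_aut; rewrite ?oner_neq0.
  by rewrite lam2E; apply: biv_congr; rewrite ?sqr_sqrtr //; field; nonzero_side.
- move=> [-> h2 -> -> ->].
  exists (autm 1 0 y2 0 0 0); split; first by apply: autm_aut; rewrite ?oner_neq0.
  by rewrite lam2E; apply: biv_congr; field; nonzero_side.
- move=> [h1 h2 -> -> ->]; have ha := sqrt_neq0 h1; have hy : 0 <= y1 by apply: ltW.
  exists (autm (Num.sqrt y1) 0 (y2 / Num.sqrt y1) 0 0 0); split.
    by apply: autm_aut; rewrite ?mulf_neq0 ?invr_neq0.
  by rewrite lam2E; apply: biv_congr; rewrite ?sqr_sqrtr //; field; nonzero_side.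
- move=> [h1 h2 -> -> ->]; have h1' : 0 < - y1 by rewrite oppr_gt0.
  have ha := sqrt_neq0 h1'; have hy : 0 <= - y1 by apply: ltW.
  exists (autm (Num.sqrt (- y1)) 0 (y2 / Num.sqrt (- y1)) 0 0 0); split.
    by apply: autm_aut; rewrite ?mulf_neq0 ?invr_neq0.
  by rewrite lam2E; apply: biv_congr; rewrite ?sqr_sqrtr //; field; nonzero_side.
- move=> [-> -> h4 ->].
  exists (autm 1 (y2 / y4) y4 0 0 0); split; first by apply: autm_aut; rewrite ?oner_neq0.
  by rewrite lam2E; apply: biv_congr; field; nonzero_side.
- move=> [h1 -> h4 ->]; have ha := sqrt_neq0 h1; have hy : 0 <= y1 by apply: ltW.
  exists (autm (Num.sqrt y1) (y2 * Num.sqrt y1 / y4) (y4 / Num.sqrt y1) 0 0 0); split.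
    by apply: autm_aut; rewrite ?mulf_neq0 ?invr_neq0.
  by rewrite lam2E; apply: biv_congr; rewrite ?sqr_sqrtr //; field; nonzero_side.
- move=> [h1 -> h4 ->]; have h1' : 0 < - y1 by rewrite oppr_gt0.
  have ha := sqrt_neq0 h1'; have hy : 0 <= - y1 by apply: ltW.
  exists (autm (Num.sqrt (- y1)) (y2 * Num.sqrt (- y1) / y4) (y4 / Num.sqrt (- y1)) 0 0 0).
  split; first by apply: autm_aut; rewrite ?mulf_neq0 ?invr_neq0.
  by rewrite lam2E; apply: biv_congr; rewrite ?sqr_sqrtr //; field; nonzero_side.
- move=> [h3 -> ->].
  exists (autm y3 0 1 0 (y1 / y3) (y2 / y3)); split; first by apply: autm_aut; rewrite ?oner_neq0.
  by rewrite lam2E; apply: biv_congr; field; nonzero_side.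
- move=> [-> -> h6].
  exists (autm 1 0 y6 (- y2 / y6) (- y4 / y6) 0); split; first by apply: autm_aut; rewrite ?oner_neq0.
  by rewrite lam2E; apply: biv_congr; field; nonzero_side.
- move=> [h1 -> h6]; have ha := sqrt_neq0 h1; have hy : 0 <= y1 by apply: ltW.
  exists (autm (Num.sqrt y1) 0 y6 (- y2 / y6) (- y4 / y6) 0); split; first exact: autm_aut.
  by rewrite lam2E; apply: biv_congr; rewrite ?sqr_sqrtr //; field; nonzero_side.
- move=> [h1 -> h6]; have h1' : 0 < - y1 by rewrite oppr_gt0.
  have ha := sqrt_neq0 h1'; have hy : 0 <= - y1 by apply: ltW.
  exists (autm (Num.sqrt (- y1)) 0 y6 (- y2 / y6) (- y4 / y6) 0); split; first exact: autm_aut.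
  by rewrite lam2E; apply: biv_congr; rewrite ?sqr_sqrtr //; field; nonzero_side.
Qed.

Lemma orbit_iff c (r r' : ext R) : in_cls c r -> (same_orbit r r' <-> in_cls c r').
Proof.
move=> hc; split => [[T [hT ->]]|hc']; first exact: orbit_stable.
have [T1 [h1 E1]] := canon_reach hc; have [T2 [h2 E2]] := canon_reach hc'.
exists (T2 *m invmx T1); split; first by apply: aut_mul => //; apply: aut_inv.
rewrite -(lam2_comp h2 (aut_inv h1) (in_cls_homog hc)) E2 E1 lam2_invK //.
exact: in_cls_homog (canon_in c).
Qed.
End OrbitClasses.

Section Cocommutators.
Variable R : realType.

Lemma rep_biv k : rep R k =
  match k with
  | C0 => biv 0 0 0 0 0 0
  | CII => biv 0 1 0 0 0 0
  | CIV => biv 0 0 0 1 0 0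
  | CVI => biv 0 0 1 0 0 0
  | CVII => biv 0 0 0 0 0 1
  end.
Proof. by have [_ ? ? ? ?] := basis_biv R; case: k; rewrite /= ?biv0. Qed.

Lemma homog_delta (w : ext R) v : homog 2 w -> homog 2 (delta w v).
Proof. by move=> /homog2_biv [y1 [y2 [y3 [y4 [y5 [y6 ->]]]]]]; rewrite deltaE; apply: homog_biv. Qed.

(* Within a class, delta_r is equivalent to delta of the canonical
   representative, which coincides with delta of the chosen representative
   of its group of classes. *)
Lemma coc_of_cls c (r : ext R) : in_cls c r -> equiv_coc (delta r) (delta (rep R (grp c))).
Proof.
move=> hc; have [T0 [h0 E0]] := canon_reach hc.
have hC := in_cls_homog (canon_in R c).
exists (invmx T0); split; first exact: aut_inv.
move=> v; rewrite invmxK E0 delta_natural // lam2_invK //; last exact: homog_delta.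
by rewrite rep_biv; case: c {hc E0 hC} => /=; rewrite !deltaE; apply: biv_congr; ring.
Qed.

(* The representatives give pairwise inequivalent cocommutators: an
   equivalence T would give delta_{r'}(T v) = delta_{T r}(T v) for v = T^-1 e3
   and v = T^-1 e4, which is impossible in coordinates. *)
Lemma coc_separate k k' : k <> k' -> ~ equiv_coc (delta (rep R k)) (delta (rep R k')).
Proof.
move=> hk [T [hT hv]]; have [uT _] := hT.
have hr : homog 2 (rep R k) by rewrite rep_biv; case: k {hk hv} => /=; apply: homog_biv.
have key w : delta (rep R k') (T *m w) = delta (lam2 T (rep R k)) (T *m w).
  by rewrite hv mulKmx // delta_natural.
have e4 := key (invmx T *m ev R b4); have e3 := key (invmx T *m ev R b3).
rewrite !mulKVmx // in e4 e3.
have [a [b [q [d [e [f [ha hq ET]]]]]]] := aut_form hT.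
have haq : a * q != 0 by rewrite mulf_neq0.
rewrite ET !rep_biv in e4 e3; clear -ha hq haq e4 e3 hk.
case: k k' hk e4 e3 => -[] // _; rewrite /= !lam2E !deltaE !evE /= =>
  /biv_inj[h1 [h2 [h3 [h4 [h5 h6]]]]] /biv_inj[h7 [h8 [h9 [h10 [h11 h12]]]]].
all: first [ lra | (apply: (negP ha); apply/eqP; nra) | (apply: (negP hq); apply/eqP; nra)
           | (apply: (negP haq); apply/eqP; nra) ].
Qed.
End Cocommutators.

Theorem mainTheorem13 (R : realType) :
  (* (Lambda^3 s1)^{s1} = 0 *)
  (forall w : ext R, g_invariant 3 w -> w = 0) /\
  (* (Lambda^2 s1)^{s1} = <e12> *)
  (forall w : ext R, g_invariant 2 w <-> exists c : R, w = c *: e12 R) /\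
  (* r-matrices = CYBE solutions = {x5 = 0, x3 x4 = 0, x3 x6 = 0} *)
  (forall r : ext R, homog 2 r ->
     (is_rmatrix r <-> schouten r r = 0) /\
     (schouten r r = 0 <-> [/\ x5 r = 0, x3 r * x4 r = 0 & x3 r * x6 r = 0])) /\
  (* the orbits of Aut(s1) on the set of r-matrices are exactly the listed sets *)
  (forall r : ext R, is_rmatrix r -> exists c, in_cls c r) /\
  (forall c, exists r : ext R, in_cls c r) /\
  (forall c (r r' : ext R), in_cls c r -> (same_orbit r r' <-> in_cls c r')) /\
  (* five classes of coboundary cocommutators with the given representatives *)
  (forall c (r : ext R), in_cls c r -> equiv_coc (delta r) (delta (rep R (grp c)))) /\
  (forall k k' : coc_cls, k <> k' ->
     ~ equiv_coc (delta (rep R k)) (delta (rep R k'))).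
Proof.
split; first exact: inv3_zero.
split; first exact: inv2E.
split; first by move=> r hr; split; [exact: rmatrix_cybe | exact: cybeE].
split; first exact: cls_cover.
split; first by move=> c; exists (canon R c); exact: canon_in.
split; first exact: orbit_iff.
split; first exact: coc_of_cls.
exact: coc_separate.
Qed.
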